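(* Let $c\in\mathbb{N}$, $I=\mathbb{N}\times[c]$, $I_n=[n]\times[c]$. Then every $\mathrm{Sym}$-invariant chain of lattices $(L_n)_{n\ge1}$ Graver-stabilizes. In particular, such a chain universal Gröbner-stabilizes, Gröbner-stabilizes with respect to an arbitrary term order on $\mathbb{Z}_{\ge0}^{(I)}$, Markov-stabilizes, and stabilizes.
   Context: $\mathbb{N}=\{1,2,\dots\}$. $\mathbb{Z}^{(J)}$: free abelian group with basis $J$; $\mathbb{Z}_{\ge0}^{(J)}$ its nonnegative vectors; $\mathbb{Z}^{(I_n)}\subseteq\mathbb{Z}^{(I)}$ via extension by zero; lattice = subgroup. $\mathrm{Sym}(n)$ is the symmetric group on $[n]$, embedded in $\mathrm{Sym}(n+1)$ as stabilizer of $n+1$, $\mathrm{Sym}=\bigcup_n\mathrm{Sym}(n)$, acting on $\mathbb{Z}^{(I)}$ by $\sigma(\mathbf{e}_{i,j})=\mathbf{e}_{\sigma(i),j}$ (so $\mathrm{Sym}(n)$ acts on $\mathbb{Z}^{(I_n)}$). A $\mathrm{Sym}$-invariant chain of lattices: $L_n\subseteq\mathbb{Z}^{(I_n)}$ lattices, $L_m\subseteq L_n$ for $m\le n$, each $\mathrm{Sym}(n)$-invariant. Basis notions for a lattice $L$: generating set; Markov basis ($\mathcal{B}$ such that for every $\mathbf{u}\ge\mathbf{0}$ the graph on the fiber $F_L(\mathbf{u})=\{\mathbf{v}\ge\mathbf{0}\mid\mathbf{u}-\mathbf{v}\in L\}$ with edges $\mathbf{v}-\mathbf{w}\in\pm\mathcal{B}$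 is connected); Gröbner basis w.r.t. a term order $\prec$ (additive well-order) (for every $\mathbf{u}$ a directed path from $\mathbf{u}$ to the $\prec$-minimum of $F_L(\mathbf{u})$ along steps $\mathbf{v}\to\mathbf{w}$, $\mathbf{v}-\mathbf{w}\in\pm\mathcal{B}$, $\mathbf{w}\prec\mathbf{v}$); universal Gröbner basis (Gröbner for every term order); Graver basis (the $\sqsubseteq$-minimal elements of $L\setminus\{\mathbf{0}\}$, where $\mathbf{u}\sqsubseteq\mathbf{v}$ iff $u_iv_i\ge0$, $|u_i|\le|v_i|$ for all $i$). An equivariant X of a $\mathrm{Sym}(n)$-invariant $L_n$ is $\mathcal{B}\subseteq L_n$ with $\mathrm{Sym}(n)(\mathcal{B})$ an X of $L_n$ (local Gröbner bases taken w.r.t. the restriction of the term order to $\mathbb{Z}_{\ge0}^{(I_n)}$). The chain X-stabilizes if there exist $p$ and an equivariant X $\mathcal{B}_p$ of $L_p$ that is an equivariant X of $L_n$ for all $n\ge p$. The chain stabilizes if there is $p$ with $L_n=\mathbb{Z}\,\mathrm{Sym}(n)(L_m)$ (subgroup generated) for all $n\ge m\ge p$. *)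

From mathcomp Require Import all_boot all_order all_algebra all_fingroup.
Set Implicit Arguments. Unset Strict Implicit. Unset Printing Implicit Defensive.
Import Order.TTheory GRing.Theory Num.Theory.
Local Open Scope ring_scope.

(* Vectors of Z^(I), I = N x [c]; row index i : nat stands for the element
   i+1 of N, column index j : 'I_c stands for j+1 of [c]. *)
Definition vec (c : nat) := nat -> 'I_c -> int.

Section Defs.
Variable c : nat.
Implicit Types (u v w : vec c) (L B G : vec c -> Prop).

Definition vzero : vec c := fun _ _ => 0.
Definition vadd u v : vec c := fun i j => u i j + v i j.
Definition vopp u : vec c := fun i j => - u i j.
Definition vsub u v : vec c := fun i j => u i j - v i j.

Definition supported_in (n : nat) u := forall i j, (n <= i)%N -> u i j = 0.
Definition finsupp u := exists n, supported_in n u.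
Definition nonneg u := forall i j, 0 <= u i j.

Definition is_lattice (n : nat) L :=
  [/\ L vzero, (forall u v, L u -> L v -> L (vsub u v)) &
      (forall u, L u -> supported_in n u)].

(* the permutation s of [n], extended to N by fixing everything >= n *)
Definition pext (n : nat) (s : {perm 'I_n}) (i : nat) : nat :=
  (fun o : option 'I_n => if o is Some k then nat_of_ord (s k) else i) (insub i).

(* action: s(e_{i,j}) = e_{s(i),j}, i.e. (s u)(i,j) = u(s^-1 i, j) *)
Definition sact (n : nat) (s : {perm 'I_n}) u : vec c :=
  fun i j => u (pext s^-1 i) j.

Definition sym_invariant (n : nat) L := forall (s : {perm 'I_n}) u, L u -> L (sact s u).

Definition sym_chain (L : nat -> vec c -> Prop) :=
  (forall n, (0 < n)%N -> is_lattice n (L n) /\ sym_invariant n (L n)) /\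
  (forall m n, (0 < m)%N -> (m <= n)%N -> forall u, L m u -> L n u).

Definition sym_orbit (n : nat) B : vec c -> Prop :=
  fun v => exists (s : {perm 'I_n}) u, B u /\ v = sact s u.

Inductive zspan (S : vec c -> Prop) : vec c -> Prop :=
| zspan0 : zspan S vzero
| zspan_gen u : S u -> zspan S u
| zspan_sub u v : zspan S u -> zspan S v -> zspan S (vsub u v).

Definition fiber L u : vec c -> Prop := fun v => nonneg v /\ L (vsub u v).

Definition pmB B d := B d \/ B (vopp d).

Inductive mconn (F B : vec c -> Prop) : vec c -> vec c -> Prop :=
| mconn_refl v : mconn F B v v
| mconn_step u v w : mconn F B u v -> F w -> pmB B (vsub v w) -> mconn F B u w.

Inductive dreach (F B : vec c -> Prop) (prec : vec c -> vec c -> Prop)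
  : vec c -> vec c -> Prop :=
| dreach_refl v : dreach F B prec v v
| dreach_step u v w : dreach F B prec u v -> F w -> pmB B (vsub v w) ->
    prec w v -> dreach F B prec u w.

Definition tdom u := nonneg u /\ finsupp u.

Definition is_term_order (prec : vec c -> vec c -> Prop) :=
  [/\ (forall u, tdom u -> ~ prec u u),
      (forall u v w, tdom u -> tdom v -> tdom w -> prec u v -> prec v w -> prec u w),
      (forall u v, tdom u -> tdom v -> [\/ u = v, prec u v | prec v u]),
      (forall u v w, tdom u -> tdom v -> tdom w -> prec u v -> prec (vadd u w) (vadd v w)) &
      well_founded (fun a b => [/\ tdom a, tdom b & prec a b])].

Definition is_markov (n : nat) L B :=
  forall u, nonneg u -> supported_in n u ->
  forall v w, fiber L u v -> fiber L u w -> mconn (fiber L u) B v w.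

Definition is_groebner (prec : vec c -> vec c -> Prop) (n : nat) L B :=
  forall u, nonneg u -> supported_in n u ->
  forall m, fiber L u m -> (forall v, fiber L u v -> v <> m -> prec m v) ->
  dreach (fiber L u) B prec u m.

Definition is_ugb (n : nat) L B :=
  forall prec, is_term_order prec -> is_groebner prec n L B.

Definition conf_le u v :=
  forall i j, 0 <= u i j * v i j /\ `|u i j| <= `|v i j|.

Definition is_graver (n : nat) L G :=
  forall v, G v <-> [/\ L v, v <> vzero &
     forall w, L w -> w <> vzero -> conf_le w v -> w = v].

Definition equivariant (P : nat -> (vec c -> Prop) -> (vec c -> Prop) -> Prop)
  (n : nat) L B := (forall b, B b -> L b) /\ P n L (sym_orbit n B).

Definition X_stabilizes (P : nat -> (vec c -> Prop) -> (vec c -> Prop) -> Prop)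
  (L : nat -> vec c -> Prop) :=
  exists p, (0 < p)%N /\ exists B, forall n, (p <= n)%N -> equivariant P n (L n) B.

Definition chain_stabilizes (L : nat -> vec c -> Prop) :=
  exists p, (0 < p)%N /\ forall m n, (p <= m)%N -> (m <= n)%N ->
    forall v, L n v <-> zspan (sym_orbit n (L m)) v.

End Defs.

From mathcomp Require Import all_boot all_order all_algebra all_fingroup.
From mathcomp Require Import zify.
From Stdlib Require Import Classical ClassicalEpsilon FunctionalExtensionality Wf_nat.
Set Implicit Arguments. Unset Strict Implicit. Unset Printing Implicit Defensive.
Import Order.TTheory GRing.Theory Num.Theory.

(* Let L be the union of the chain, a Sym-invariant lattice of Z^(I).  Read a
   vector of Z^(I) as the word of its rows in Z^c: the conformal order on Z^c
   is a well-quasi-order (Dickson), so by Higman's lemma the conformal order on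
   Z^(I) is a well-quasi-order up to permutations of the rows.  The Graver
   elements of L are pairwise conformally incomparable, hence finitely many up
   to Sym, and they all have a permuted copy in a single L_N.  As Graver
   elements generate, L_n = L /\ Z^(I_n) for n >= N, and the Graver basis of
   L_n is the Sym(n)-orbit of the Graver elements of L lying in L_N.  Finally a
   Graver basis is a Groebner basis for every term order (Sturmfels), a Markov
   basis and a generating set. *)

Lemma nat_least_witness (P : nat -> Prop) :
  (exists n, P n) -> exists n, P n /\ forall m, P m -> (n <= m)%N.
Proof.
move=> [n Pn]; elim/ltn_ind: n Pn => n IH Pn.
case: (classic (exists2 m, P m & (m < n)%N)) => [[m Pm ltmn]|nlt].
  exact: IH ltmn Pm.
exists n; split=> // m Pm; rewrite leqNgt; apply/negP => ltmn.
by apply: nlt; exists m.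
Qed.

Section WellQuasiOrder.
Variables (A : Type) (R : A -> A -> Prop).

Definition wqo := forall f : nat -> A, exists i j, (i < j)%N /\ R (f i) (f j).

Definition chain_subseq := forall f : nat -> A,
  exists2 phi : nat -> nat, {homo phi : i j / (i < j)%N} &
    {homo f \o phi : i j / (i < j)%N >-> R i j}.

Hypothesis R_trans : forall y x z, R x y -> R y z -> R x z.

(* Ramsey's argument: either from some index on every term has an R-larger
   successor, giving an R-chain, or infinitely many terms have none, giving a
   bad subsequence. *)
Lemma wqo_chain_subseq : wqo -> chain_subseq.
Proof.
move=> Rwqo f.
pose terminal i := ~ exists j, (i < j)%N /\ R (f i) (f j).
case: (classic (exists M, forall i, (M <= i)%N -> ~ terminal i)) => [[M nonterm]|].
  have [next Hnext] : exists next : nat -> nat,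
      forall i, (M <= i)%N -> (i < next i)%N /\ R (f i) (f (next i)).
    apply: (choice (fun i b => (M <= i)%N -> (i < b)%N /\ R (f i) (f b))) => i.
    case: (leqP M i) => [leMi|ltiM]; last by exists i => leMi; lia.
    by have [j ?] := NNPP _ (nonterm i leMi); exists j.
  pose phi k := iter k next M.
  have lePhi k : (M <= phi k)%N.
    by elim: k => [|k IHk] //=; apply: leq_trans IHk (ltnW (Hnext _ IHk).1).
  exists phi.
    by apply: homo_ltn => [? ? ?|k]; [exact: ltn_trans | exact: (Hnext _ (lePhi k)).1].
  by apply: homo_ltn => // k; exact: (Hnext _ (lePhi k)).2.
move=> /not_ex_all_not unbounded.
have [t Ht] : exists t : nat -> nat, forall M, (M <= t M)%N /\ terminal (t M).
  apply: (choice (fun M b => (M <= b)%N /\ terminal b)) => M.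
  by apply: NNPP => none; apply: (unbounded M) => i leMi termi; apply: none; exists i.
pose psi k := iter k (fun x => t x.+1) (t 0).
have psi_incr : {homo psi : i j / (i < j)%N}.
  by apply: homo_ltn => [? ? ?|k]; [exact: ltn_trans | exact: (Ht _).1].
have psi_terminal k : terminal (psi k) by case: k => [|k]; exact: (Ht _).2.
have [i [j [ltij Rij]]] := Rwqo (f \o psi).
by case: (psi_terminal i); exists (psi j); split; [exact: psi_incr|].
Qed.

End WellQuasiOrder.

Lemma chain_subseqI A (R1 R2 : A -> A -> Prop) :
  chain_subseq R1 -> chain_subseq R2 -> chain_subseq (fun x y => R1 x y /\ R2 x y).
Proof.
move=> R1ch R2ch f; have [phi1 incr1 R1phi] := R1ch f.
have [phi2 incr2 R2phi] := R2ch (f \o phi1).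
by exists (phi1 \o phi2) => [i j /incr2/incr1 //|i j ltij]; split; [apply/R1phi/incr2|apply: R2phi].
Qed.

Lemma chain_subseq_comp A B (R : B -> B -> Prop) (h : A -> B) :
  chain_subseq R -> chain_subseq (fun x y => R (h x) (h y)).
Proof. by move=> Rch f; apply: Rch (h \o f). Qed.

Lemma sub_chain_subseq A (R R' : A -> A -> Prop) :
  (forall x y, R x y -> R' x y) -> chain_subseq R -> chain_subseq R'.
Proof. by move=> subR Rch f; have [phi ? Rphi] := Rch f; exists phi => // i j /Rphi/subR. Qed.

Lemma chain_subseqT A : chain_subseq (fun _ _ : A => True).
Proof. by move=> f; exists id. Qed.

Lemma chain_subseq_leq : chain_subseq leq.
Proof.
apply: wqo_chain_subseq => [? ? ?|f]; first exact: leq_trans.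
have [_ [[i <-] f_min]] :=
  nat_least_witness (ex_intro (fun v => exists i, f i = v) _ (ex_intro _ 0 erefl)).
by exists i, i.+1; split=> //; apply: f_min; exists i.+1.
Qed.

Lemma chain_subseq_eq_bool : chain_subseq (@eq bool).
Proof.
apply: wqo_chain_subseq => [? ? ? -> //|f].
case E0: (f 0); case E1: (f 1); case E2: (f 2).
all: first [ by exists 0, 1; rewrite E0 E1
           | by exists 0, 2; rewrite E0 E2
           | by exists 1, 2; rewrite E1 E2 ].
Qed.

Section MinimalBadSequence.
Variables (X : Type) (E : X -> X -> Prop) (mu : X -> nat).

Definition bad (f : nat -> X) := forall i j, (i < j)%N -> ~ E (f i) (f j).

Definition agree_below (k : nat) (f g : nat -> X) := forall i, (i < k)%N -> f i = g i.

Lemma minimal_bad_extension k h : exists h', bad h -> [/\ bad h', agree_below k h' h &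
  forall g, bad g -> agree_below k g h -> (mu (h' k) <= mu (g k))%N].
Proof.
case: (classic (bad h)) => [bad_h|]; last by exists h.
have [_ [[h' [bad_h' agree_h' <-]] h'_min]] := nat_least_witness
  (ex_intro (fun n => exists g, [/\ bad g, agree_below k g h & mu (g k) = n]) _
     (ex_intro _ h (And3 bad_h (fun _ _ => erefl) erefl))).
by exists h' => _; split=> // g bad_g agree_g; apply: h'_min; exists g.
Qed.

(* Nash-Williams' minimal bad sequence: its k-th term is chosen of least
   measure among the bad sequences extending its first k terms. *)
Lemma minimal_bad_sequence : (exists f, bad f) -> exists2 m, bad m &
  forall k g, bad g -> agree_below k g m -> (mu (m k) <= mu (g k))%N.
Proof.
move=> [f bad_f].
have [next Hnext] := choice (fun (kh : nat * (nat -> X)) h' => bad kh.2 ->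
  [/\ bad h', agree_below kh.1 h' kh.2 &
      forall g, bad g -> agree_below kh.1 g kh.2 -> (mu (h' kh.1) <= mu (g kh.1))%N])
  (fun kh => minimal_bad_extension kh.1 kh.2).
pose gs k := iteri k (fun k h => next (k, h)) f.
have bad_gs k : bad (gs k) by elim: k => [|k IHk] //=; have [] := Hnext (k, gs k) IHk.
have agree_gs k l : (k <= l)%N -> agree_below k (gs l) (gs k).
  elim: l => [|l IHl]; first by rewrite leqn0 => /eqP ->.
  rewrite leq_eqVlt => /predU1P [-> //|le_kl i ltik].
  have [_ agree_next _] := Hnext (l, gs l) (bad_gs l).
  by rewrite -IHl //; apply: agree_next => /=; lia.
pose m k := gs k.+1 k.
have m_gs k : agree_below k m (gs k) by move=> i ltik; symmetry; exact: agree_gs.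
exists m => [i j ltij|k g bad_g agree_g].
  by rewrite !(m_gs j.+1) //; [exact: bad_gs | lia].
have [_ _] := Hnext (k, gs k) (bad_gs k); apply=> // i ltik.
by rewrite agree_g // (m_gs k).
Qed.

End MinimalBadSequence.

Section Higman.
Variables (A : Type) (R : A -> A -> Prop).

Inductive emb : seq A -> seq A -> Prop :=
| emb_nil t : emb [::] t
| emb_skip s b t : emb s t -> emb s (b :: t)
| emb_cons a b s t : R a b -> emb s t -> emb (a :: s) (b :: t).

Lemma emb_nth (x0 : A) s t : emb s t -> exists h : nat -> nat,
  [/\ forall i, (i < size s)%N -> (h i < size t)%N,
      forall i j, (i < j)%N -> (j < size s)%N -> (h i < h j)%N &
      forall i, (i < size s)%N -> R (nth x0 s i) (nth x0 t (h i))].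
Proof.
elim=> [t0|s0 b t0 _ [h [h_lt h_incr h_R]]|a b s0 t0 Rab _ [h [h_lt h_incr h_R]]].
- by exists id.
- by exists (fun i => (h i).+1); split=> [i /h_lt|i j ? ?|i /h_R] //; rewrite ltnS h_incr.
- exists (fun i => if i is i'.+1 then (h i').+1 else 0).
  by split=> [[|i] // /h_lt|[|i] [|j] // ltij ltj|[|i] // /h_R] //; rewrite ltnS h_incr.
Qed.

Hypothesis R_chain : chain_subseq R.

(* In a minimal bad sequence m of words, the tails of an R-chain of heads
   would form a bad sequence undercutting m. *)
Theorem higman : wqo emb.
Proof.
move=> f; apply: NNPP => good_f.
have bad_f : bad emb f by move=> i j ltij emb_ij; apply: good_f; exists i, j.
have [m bad_m m_min] := minimal_bad_sequence size (ex_intro _ f bad_f).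
have m_cons k : m k <> [::] by move=> mk0; apply: (bad_m k k.+1) => //; rewrite mk0; exact: emb_nil.
have x0 : A by have := m_cons 0; case: (m 0) => [|x0 _] //; exact: x0.
pose t k := behead (m k).
have m_ht k : m k = head x0 (m k) :: t k by have := m_cons k; rewrite /t; case: (m k).
have [phi phi_incr R_phi] := R_chain (fun k => head x0 (m k)).
pose g i := if (i < phi 0)%N then m i else t (phi (i - phi 0)).
have bad_g : bad emb g.
  move=> i j ltij; rewrite /g.
  case: (ltnP j (phi 0)) => ltj; first by rewrite (ltn_trans ltij ltj); exact: bad_m.
  have phi_le : {homo phi : i j / (i <= j)%N} by exact: ltnW_homo.
  case: (ltnP i (phi 0)) => lti emb_ij.
    apply: (bad_m i (phi (j - phi 0))); first exact: leq_trans lti (phi_le _ _ (leq0n _)).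
    by rewrite (m_ht (phi _)); exact: emb_skip.
  apply: (bad_m (phi (i - phi 0)) (phi (j - phi 0))); first by apply: phi_incr; lia.
  rewrite (m_ht (phi (i - phi 0))) (m_ht (phi (j - phi 0))).
  by apply: emb_cons => //; apply: R_phi; lia.
have agree_g : agree_below (phi 0) g m by move=> i lti; rewrite /g lti.
by have := m_min (phi 0) g bad_g agree_g; rewrite /g ltnn subnn {1}(m_ht (phi 0)) /= ltnn.
Qed.

End Higman.

Definition perm_below (N : nat) (f g : nat -> nat) :=
  [/\ cancel g f, cancel f g, forall i, (N <= i)%N -> f i = i &
      forall i, (N <= i)%N -> g i = i].

Lemma perm_below_sym N f g : perm_below N f g -> perm_below N g f.
Proof. by case. Qed.

Lemma perm_below_ltn N f g i : perm_below N f g -> (i < N)%N -> (f i < N)%N.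
Proof.
case=> _ fK _ g_id ltiN; case: (leqP N (f i)) => // leNfi.
by have := g_id _ leNfi; rewrite fK; lia.
Qed.

Lemma perm_below_widen N M f g : (N <= M)%N -> perm_below N f g -> perm_below M f g.
Proof.
move=> leNM [gK fK f_id g_id].
by split=> // i leMi; [apply: f_id | apply: g_id]; exact: leq_trans leMi.
Qed.

Lemma perm_below_comp N f g f' g' : perm_below N f g -> perm_below N f' g' ->
  perm_below N (f \o f') (g' \o g).
Proof.
case=> gK fK f_id g_id [gK' fK' f_id' g_id']; split=> i /=.
- by rewrite gK' gK.
- by rewrite fK fK'.
- by move=> leNi; rewrite f_id' // f_id.
- by move=> leNi; rewrite g_id // g_id'.
Qed.

Definition nat_swap (a b i : nat) : nat := if i == a then b else if i == b then a else i.

Lemma perm_below_swap N a b : (a < N)%N -> (b < N)%N ->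
  perm_below N (nat_swap a b) (nat_swap a b).
Proof.
by move=> ltaN ltbN; split=> [i|i|i|i]; rewrite /nat_swap; repeat case: eqP; lia.
Qed.

Lemma perm_below_extend N (h : nat -> nat) (S : seq nat) : uniq S ->
  {in S, forall s, (s < N)%N /\ (h s < N)%N} -> {in S &, injective h} ->
  exists f g, perm_below N f g /\ {in S, f =1 h}.
Proof.
elim: S => [|s S IHS] /=; first by exists id, id.
move=> /andP [sS uniqS] S_lt h_inj.
have [f [g [fg_perm f_h]]] : exists f g, perm_below N f g /\ {in S, f =1 h}.
  apply: IHS => // [x xS|x y xS yS]; first by apply: S_lt; rewrite inE xS orbT.
  by apply: h_inj; rewrite inE ?xS ?yS orbT.
have [ltsN lthsN] := S_lt s (mem_head s S).
exists (nat_swap (f s) (h s) \o f), (g \o nat_swap (f s) (h s)); split.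
  apply: (perm_below_comp _ fg_perm).
  by apply: perm_below_swap => //; exact: (perm_below_ltn fg_perm).
move=> x; rewrite inE => /predU1P [-> | xS] /=; first by rewrite /nat_swap eqxx.
have neq_xs : x != s by apply: contraNneq sS => <-.
have neq_fs : h x != f s.
  have [_ fK _ _] := fg_perm.
  by rewrite -f_h //; apply: contra neq_xs => /eqP /(can_inj fK) ->.
have neq_hs : h x != h s.
  by apply: contra neq_xs => /eqP /h_inj -> //; rewrite inE ?xS ?eqxx ?orbT.
by rewrite (f_h x xS) /nat_swap (negbTE neq_fs) (negbTE neq_hs).
Qed.

Lemma pext_ord n (s : {perm 'I_n}) (k : 'I_n) : pext s k = s k.
Proof. by rewrite /pext valK. Qed.

Lemma pext_ge n (s : {perm 'I_n}) i : (n <= i)%N -> pext s i = i.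
Proof. by move=> leni; rewrite /pext insubN // -leqNgt. Qed.

Lemma pextK n (s : {perm 'I_n}) : cancel (pext s) (pext s^-1).
Proof.
move=> i; case: (ltnP i n) => [ltin|leni]; last by rewrite !pext_ge.
by rewrite -[i]/(nat_of_ord (Ordinal ltin)) !pext_ord permK.
Qed.

Lemma perm_below_pext n (s : {perm 'I_n}) : perm_below n (pext s^-1) (pext s).
Proof.
split; [exact: pextK| |exact: pext_ge|exact: pext_ge].
by have := pextK s^-1; rewrite invgK.
Qed.

Section Vectors.
Variable c : nat.
Local Open Scope ring_scope.
Implicit Types (u v w h : vec c) (f g : nat -> nat).

Lemma vec_ext u v : (forall i j, u i j = v i j) -> u = v.
Proof. by move=> uv; do 2![apply: functional_extensionality => ?]; exact: uv. Qed.

Definition vcomp u (f : nat -> nat) : vec c := fun i j => u (f i) j.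

Lemma vcompK f g : cancel g f -> cancel (vcomp^~ f) (vcomp^~ g).
Proof. by move=> gK u; apply: vec_ext => i j; rewrite /vcomp gK. Qed.

Lemma vsub_eq0 u v : vsub u v = @vzero c -> u = v.
Proof.
move=> uv0; apply: vec_ext => i j.
by have := congr1 (fun w => w i j) uv0; rewrite /vsub /vzero /=; lia.
Qed.

Definition vpos u : vec c := fun i j => if 0 <= u i j then u i j else 0.

Lemma sact_perm_below N f g : perm_below N f g ->
  exists s : {perm 'I_N}, forall u, sact s u = vcomp u f.
Proof.
move=> fg_perm; have [_ fK _ _] := fg_perm.
pose F (i : 'I_N) := Ordinal (perm_below_ltn fg_perm (ltn_ord i)).
have F_inj : injective F by move=> i j /(congr1 val) /(can_inj fK) /val_inj.
exists (perm F_inj)^-1%g => u; apply: vec_ext => i j; rewrite /sact /vcomp invgK.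
case: (ltnP i N) => [ltiN|leNi]; last by have [_ _ f_id _] := fg_perm; rewrite pext_ge ?f_id.
by rewrite -[i]/(nat_of_ord (Ordinal ltiN)) pext_ord permE.
Qed.

Lemma sact_restrict n K phi psi v h : perm_below K phi psi ->
  supported_in n v -> supported_in n h -> v = vcomp h phi ->
  exists s : {perm 'I_n}, v = sact s h.
Proof.
move=> phi_perm v_supp h_supp v_phi; have [psiK phiK _ _] := phi_perm.
pose S := [seq i <- iota 0 n | (phi i < n)%N].
have [tau [taui [tau_perm tau_phi]]] : exists f g, perm_below n f g /\ {in S, f =1 phi}.
  apply: perm_below_extend; first by rewrite filter_uniq // iota_uniq.
    by move=> s; rewrite mem_filter mem_iota => /andP [-> /andP [_ ?]]; split=> //; lia.
  by move=> x y _ _ /(can_inj phiK).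
have [_ tauK tau_id _] := tau_perm.
have [s s_tau] := sact_perm_below tau_perm.
exists s; rewrite s_tau; apply: vec_ext => i j; rewrite /vcomp.
case: (ltnP i n) => [ltin|leni]; last by rewrite tau_id // v_supp ?h_supp.
case: (ltnP (phi i) n) => [ltphi|lephi].
  by rewrite v_phi tau_phi // mem_filter mem_iota ltphi ltin.
rewrite v_phi /vcomp h_supp //; apply/eqP; apply: contraT => nz_tau.
(* a nonzero row tau i of h would be the row phi i' of some i' in S, forcing i' = i *)
pose i' := psi (tau i).
have lt_tau : (tau i < n)%N := perm_below_ltn tau_perm ltin.
have lt_i' : (i' < n)%N.
  rewrite ltnNge; apply: contra nz_tau => /(v_supp _ j).
  by rewrite v_phi /vcomp /i' psiK => ->.
have S_i' : i' \in S by rewrite mem_filter mem_iota /i' psiK lt_tau lt_i'.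
have tau_i' : tau i' = tau i by rewrite tau_phi // /i' psiK.
by move: lephi; rewrite -(can_inj tauK tau_i') /i' psiK leqNgt lt_tau.
Qed.

Definition conf_int (a b : int) := (0 <= a /\ a <= b) \/ (b <= a /\ a <= 0).

Lemma conf_leE u v : conf_le u v <-> forall i j, conf_int (u i j) (v i j).
Proof.
rewrite /conf_le /conf_int; split=> uv i j; have := uv i j.
  by case: (lerP 0 (u i j)); case: (lerP 0 (v i j)); nia.
by case: (lerP 0 (u i j)); case: (lerP 0 (v i j)); nia.
Qed.

Lemma chain_subseq_conf_int : chain_subseq conf_int.
Proof.
have sign_abs := chain_subseqI (chain_subseq_comp (fun a : int => 0 <= a) chain_subseq_eq_bool)
                               (chain_subseq_comp (fun a : int => absz a) chain_subseq_leq).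
apply: sub_chain_subseq sign_abs.
by move=> a b [] /[swap]; rewrite /conf_int; case: (lerP 0 a); case: (lerP 0 b) => //; lia.
Qed.

Lemma chain_subseq_conf_row :
  chain_subseq (fun x y : 'I_c -> int => forall j, conf_int (x j) (y j)).
Proof.
suff row_prefix k : chain_subseq (fun x y : 'I_c -> int =>
    forall j : 'I_c, (j < k)%N -> conf_int (x j) (y j)).
  by apply: sub_chain_subseq (row_prefix c) => x y xy j; apply: xy.
elim: k => [|k IHk]; first by apply: sub_chain_subseq (@chain_subseqT _) => x y _ [].
have col_k : chain_subseq (fun x y : 'I_c -> int =>
    forall j : 'I_c, val j = k -> conf_int (x j) (y j)).
  case: (ltnP k c) => [ltkc|lekc].
    apply: sub_chain_subseq (chain_subseq_comp (fun x => x (Ordinal ltkc)) chain_subseq_conf_int).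
    by move=> x y xy j jk; rewrite (_ : j = Ordinal ltkc) //; exact: val_inj.
  apply: sub_chain_subseq (@chain_subseqT _) => x y _ j jk.
  by have := ltn_ord j; rewrite -[nat_of_ord j]/(val j) jk ltnNge lekc.
apply: sub_chain_subseq (chain_subseqI IHk col_k) => x y [xy_lt xy_k] j.
by rewrite ltnS leq_eqVlt => /predU1P [/xy_k|/xy_lt].
Qed.

(* Reading a vector as the word of its rows, Higman's lemma embeds the rows
   of v k into rows of v l in increasing order; any such injection extends
   to a bounded permutation. *)
Lemma conf_wqo_up_to_perm (v : nat -> vec c) : (forall k, finsupp (v k)) ->
  exists k l, (k < l)%N /\
    exists N f g, perm_below N f g /\ conf_le (v k) (vcomp (v l) g).
Proof.
move=> /choice [nb v_supp].
pose rows k := [seq (fun j => v k i j) | i <- iota 0 (nb k)].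
have size_rows k : size (rows k) = nb k by rewrite size_map size_iota.
have [k [l [ltkl emb_kl]]] := higman chain_subseq_conf_row rows.
have [h [h_lt h_incr h_conf]] := emb_nth (fun _ => 0) emb_kl.
rewrite !size_rows in h_lt h_incr h_conf.
exists k, l; split=> //.
have [f [g [fg_perm f_h]]] : exists f g, perm_below (maxn (nb k) (nb l)) f g /\
    {in iota 0 (nb k), f =1 h}.
  apply: perm_below_extend; first exact: iota_uniq.
    by move=> s; rewrite mem_iota add0n => /[dup] lts /h_lt; lia.
  move=> x y; rewrite !mem_iota !add0n !leq0n /= => ltx lty hxy.
  by case: (ltngtP x y) => // ltxy; [have := h_incr _ _ ltxy lty|have := h_incr _ _ ltxy ltx]; lia.
exists (maxn (nb k) (nb l)), g, f; split; first exact: perm_below_sym.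
apply/conf_leE => i j; rewrite /vcomp.
case: (ltnP i (nb k)) => [ltik|leki]; last by rewrite (v_supp k) // /conf_int; lia.
have := h_conf i ltik j; rewrite !(nth_map 0%N) ?size_iota ?h_lt // !nth_iota ?h_lt //.
by rewrite !add0n f_h // mem_iota.
Qed.

End Vectors.

Ltac vec_lia := apply: vec_ext => ? ?; cbv [vadd vsub vopp vzero vpos]; repeat case: ifP; lia.

Lemma ltn_sum (I : finType) (i0 : I) (F G : I -> nat) :
  (forall i, (F i <= G i)%N) -> (F i0 < G i0)%N -> (\sum_i F i < \sum_i G i)%N.
Proof.
move=> leFG ltFG0; rewrite (bigD1 i0) // [ltnRHS](bigD1 i0) //=.
by rewrite -addSn leq_add // leq_sum.
Qed.

Section ConformalOrder.
Variable c : nat.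
Local Open Scope ring_scope.
Implicit Types (u v w g : vec c).

Lemma conf_le_refl v : conf_le v v.
Proof. by apply/conf_leE => i j; rewrite /conf_int; lia. Qed.

Lemma conf_le_trans u v w : conf_le u v -> conf_le v w -> conf_le u w.
Proof.
move=> /conf_leE uv /conf_leE vw; apply/conf_leE => i j.
by have := uv i j; have := vw i j; rewrite /conf_int; lia.
Qed.

Lemma conf_le_subl g w : conf_le g w -> conf_le (vsub w g) w.
Proof.
by move=> /conf_leE gw; apply/conf_leE => i j; have := gw i j; rewrite /conf_int /vsub; lia.
Qed.

Lemma conf_le_supported n u v : conf_le u v -> supported_in n v -> supported_in n u.
Proof.
by move=> /conf_leE uv v_supp i j leni; have := uv i j; rewrite v_supp // /conf_int; lia.
Qed.

Definition vnorm n v : nat := (\sum_(i < n) \sum_(j < c) `|v i j|)%N.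

Definition conf_lt n u v := [/\ supported_in n v, conf_le u v & u <> v].

Lemma vnorm_conf_lt n u v : conf_lt n u v -> (vnorm n u < vnorm n v)%N.
Proof.
move=> [v_supp /conf_leE uv neq_uv].
have [i [j neq_ij]] : exists i j, u i j <> v i j.
  apply: NNPP => eq_uv; apply: neq_uv; apply: vec_ext => i j.
  by apply: NNPP => neq_ij; apply: eq_uv; exists i, j.
have ltin : (i < n)%N.
  rewrite ltnNge; apply/negP => leni; apply: neq_ij.
  by have := uv i j; rewrite v_supp // /conf_int; lia.
have le_abs i' j' : (`|u i' j'| <= `|v i' j'|)%N by have := uv i' j'; rewrite /conf_int; lia.
apply: (@ltn_sum _ (Ordinal ltin)) => [i'|]; first by apply: leq_sum => j' _; exact: le_abs.
apply: (@ltn_sum _ j) => [j'|]; first exact: le_abs.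
by have := uv i j; rewrite /conf_int /=; lia.
Qed.

Lemma conf_lt_wf n : well_founded (conf_lt n).
Proof. by apply: (well_founded_lt_compat _ (vnorm n)) => u v /vnorm_conf_lt/ssrnat.ltP. Qed.

Lemma conf_lt_subl n g w : supported_in n w -> conf_le g w -> g <> @vzero c ->
  conf_lt n (vsub w g) w.
Proof.
move=> w_supp gw nz_g; split=> //; first exact: conf_le_subl.
move=> eq_w; apply: nz_g; apply: vec_ext => i j.
by have := congr1 (fun u => u i j) eq_w; rewrite /vsub /vzero /=; lia.
Qed.

End ConformalOrder.

Section GraverBasis.
Variables (c n : nat) (L : vec c -> Prop).
Local Open Scope ring_scope.
Implicit Types (u v w x y g : vec c).

Definition graver g :=
  [/\ L g, g <> @vzero c & forall w, L w -> w <> @vzero c -> conf_le w g -> w = g].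

Hypothesis L_lat : is_lattice n L.

Lemma lattice0 : L (@vzero c). Proof. by case: L_lat. Qed.

Lemma latticeB u v : L u -> L v -> L (vsub u v). Proof. by case: L_lat => _ + _; apply. Qed.

Lemma lattice_supported u : L u -> supported_in n u. Proof. by case: L_lat => _ _; apply. Qed.

Lemma latticeD u v : L u -> L v -> L (vadd u v).
Proof.
move=> Lu Lv; have -> : vadd u v = vsub u (vsub (@vzero c) v) by vec_lia.
by apply: latticeB => //; apply: latticeB => //; exact: lattice0.
Qed.

Lemma exists_graver_conf_le w : L w -> w <> @vzero c -> exists2 g, graver g & conf_le g w.
Proof.
elim/(well_founded_ind (@conf_lt_wf c n)): w => w IHw Lw nz_w.
case: (classic (graver w)) => [gr_w|ngr_w]; first by exists w => //; exact: conf_le_refl.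
have [w' [Lw' nz_w' w'w neq_w']] : exists w', [/\ L w', w' <> @vzero c, conf_le w' w & w' <> w].
  apply: NNPP => none; apply: ngr_w; split=> // w' Lw' nz_w' w'w; apply: NNPP => neq_w'.
  by apply: none; exists w'.
have [g gr_g gw'] := IHw w' (And3 (lattice_supported Lw) w'w neq_w') Lw' nz_w'.
by exists g => //; exact: conf_le_trans gw' w'w.
Qed.

Lemma graver_generates (L' : vec c -> Prop) : L' (@vzero c) ->
  (forall u v, L' u -> L' v -> L' (vsub u v)) -> (forall g, graver g -> L' g) ->
  forall w, L w -> L' w.
Proof.
move=> L'0 L'B L'gr w; elim/(well_founded_ind (@conf_lt_wf c n)): w => w IHw Lw.
case: (classic (w = @vzero c)) => [-> //|nz_w].
have [g gr_g gw] := exists_graver_conf_le Lw nz_w; have [Lg nz_g _] := gr_g.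
have L'wg : L' (vsub w g).
  by apply: IHw (latticeB Lw Lg); exact: conf_lt_subl (lattice_supported Lw) gw nz_g.
have -> : w = vsub (vsub w g) (vsub (@vzero c) g) by vec_lia.
exact: L'B L'wg (L'B _ _ L'0 (L'gr g gr_g)).
Qed.

Lemma fiber_supported u v : supported_in n u -> fiber L u v -> supported_in n v.
Proof.
move=> u_supp [_ /lattice_supported uv_supp] i j leni.
by have := uv_supp i j leni; rewrite /vsub u_supp //; lia.
Qed.

Lemma fiber_diff u v w : fiber L u v -> fiber L u w -> L (vsub v w).
Proof.
move=> [_ Luv] [_ Luw]; have -> : vsub v w = vsub (vsub u w) (vsub u v) by vec_lia.
exact: latticeB.
Qed.

Lemma fiber_subr u v w g : fiber L u v -> nonneg w -> L g -> conf_le g (vsub v w) ->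
  fiber L u (vsub v g).
Proof.
move=> [v_nn Luv] w_nn Lg /conf_leE gvw; split.
  by move=> i j; have := v_nn i j; have := w_nn i j; have := gvw i j; rewrite /conf_int /vsub; lia.
have -> : vsub u (vsub v g) = vadd (vsub u v) g by vec_lia.
exact: latticeD.
Qed.

Lemma graver_markov (B : vec c -> Prop) : (forall g, graver g -> B g) -> is_markov n L B.
Proof.
move=> grB u _ u_supp.
suff conn d : forall v w, d = vsub v w -> fiber L u v -> fiber L u w -> mconn (fiber L u) B w v.
  by move=> v w Fv Fw; exact: conn Fw Fv.
elim/(well_founded_ind (@conf_lt_wf c n)): d => d IHd v w eq_d Fv Fw; subst d.
case: (classic (v = w)) => [-> |neq_vw]; first exact: mconn_refl.
have Ld := fiber_diff Fv Fw.
have nz_d : vsub v w <> @vzero c by move/vsub_eq0.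
have [g gr_g gd] := exists_graver_conf_le Ld nz_d; have [Lg nz_g _] := gr_g.
have Fvg := fiber_subr Fv Fw.1 Lg gd.
have lt_d : conf_lt n (vsub (vsub v g) w) (vsub v w).
  have -> : vsub (vsub v g) w = vsub (vsub v w) g by vec_lia.
  exact: conf_lt_subl (lattice_supported Ld) gd nz_g.
apply: mconn_step (IHd _ lt_d _ _ erefl Fvg Fw) Fv _.
rewrite /pmB (_ : vopp (vsub (vsub v g) v) = g); last by vec_lia.
by right; exact: grB.
Qed.

Lemma tdom_supported v : nonneg v -> supported_in n v -> tdom v.
Proof. by move=> v_nn v_supp; split=> //; exists n. Qed.

Lemma tdom_conf_parts x y g : nonneg x -> nonneg y -> supported_in n x ->
  supported_in n y -> supported_in n g -> conf_le g (vsub x y) ->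
  [/\ tdom (vpos g), tdom (vpos (vopp g)), tdom (vsub x (vpos g)) &
      tdom (vsub y (vpos (vopp g)))].
Proof.
move=> x_nn y_nn x_supp y_supp g_supp /conf_leE gxy.
split; apply: tdom_supported => i j; rewrite /vsub /vpos /vopp;
  try by move=> leni; rewrite ?(x_supp i j leni) ?(y_supp i j leni) g_supp //; case: ifP; lia.
all: have := gxy i j; have := x_nn i j; have := y_nn i j.
all: by rewrite /conf_int /vsub; case: ifP; lia.
Qed.

(* Sturmfels' argument: split a Graver element g conformal to x - y as
   g = g+ - g-.  If g- < g+ then x - g < x; otherwise y + g < y < x and one
   recurses on the conformally smaller difference x - (y + g). *)
Lemma graver_term_order_step prec x : is_term_order prec -> nonneg x -> supported_in n x ->
  forall y, nonneg y -> supported_in n y -> L (vsub x y) -> prec y x ->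
  exists2 g, graver g & conf_le g (vsub x y) /\ prec (vsub x g) x.
Proof.
move=> [irr trans total addr _] x_nn x_supp.
suff step d : forall y, d = vsub x y -> nonneg y -> supported_in n y -> L d -> prec y x ->
    exists2 g, graver g & conf_le g d /\ prec (vsub x g) x.
  by move=> y; exact: step.
have tx := tdom_supported x_nn x_supp.
elim/(well_founded_ind (@conf_lt_wf c n)): d => d IHd y eq_d y_nn y_supp Ld lt_yx; subst d.
have ty := tdom_supported y_nn y_supp.
have nz_d : vsub x y <> @vzero c by move/vsub_eq0 => eq_xy; apply: (irr x tx); rewrite {1}eq_xy.
have [g gr_g gd] := exists_graver_conf_le Ld nz_d; have [Lg nz_g _] := gr_g.
have g_supp := lattice_supported Lg.
have [tp tn tx' ty'] := tdom_conf_parts x_nn y_nn x_supp y_supp g_supp gd.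
case: (total _ _ tp tn) => [eq_pn|lt_pn|lt_np].
- case: nz_g; apply: vec_ext => i j; have := congr1 (fun w => w i j) eq_pn.
  by rewrite /vpos /vopp /vzero; do 2 case: ifP; lia.
- pose z := vadd (vpos g) (vsub y (vpos (vopp g))).
  have z_nn : nonneg z by move=> i j; have := tp.1 i j; have := ty'.1 i j; rewrite /z /vadd; lia.
  have z_supp : supported_in n z.
    by move=> i j leni; rewrite /z /vadd /vsub /vpos /vopp g_supp ?y_supp.
  have tz := tdom_supported z_nn z_supp.
  have lt_zx : prec z x.
    have eq_y : vadd (vpos (vopp g)) (vsub y (vpos (vopp g))) = y by vec_lia.
    by apply: (trans _ y _ tz ty tx _ lt_yx); have := addr _ _ _ tp tn ty' lt_pn; rewrite eq_y.
  have xz : vsub x z = vsub (vsub x y) g by rewrite /z; vec_lia.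
  have lt_d : conf_lt n (vsub x z) (vsub x y).
    by rewrite xz; exact: conf_lt_subl (lattice_supported Ld) gd nz_g.
  have Lxz : L (vsub x z) by rewrite xz; exact: latticeB.
  have [g' gr_g' [g'xz lt_xg']] := IHd _ lt_d z erefl z_nn z_supp Lxz lt_zx.
  by exists g' => //; split=> //; apply: conf_le_trans g'xz _; rewrite xz; exact: conf_le_subl.
- have eq_x : vadd (vpos g) (vsub x (vpos g)) = x by vec_lia.
  have eq_xg : vadd (vpos (vopp g)) (vsub x (vpos g)) = vsub x g by vec_lia.
  by exists g => //; split=> //; have := addr _ _ _ tn tp tx' lt_np; rewrite eq_x eq_xg.
Qed.

Lemma dreach_cons F B prec x y m : dreach F B prec y m ->
  F y -> pmB B (vsub x y) -> prec y x -> dreach F B prec x m.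
Proof.
elim=> [v|v w w' _ IH Fw' Bww' lt_w'w] Fy Bxy lt_yx.
  exact: dreach_step (dreach_refl _ _ _ x) Fy Bxy lt_yx.
exact: dreach_step (IH Fy Bxy lt_yx) Fw' Bww' lt_w'w.
Qed.

Lemma graver_groebner prec (B : vec c -> Prop) : is_term_order prec ->
  (forall g, graver g -> B g) -> is_groebner prec n L B.
Proof.
move=> prec_order grB u u_nn u_supp m Fm m_min; have [_ _ _ _ prec_wf] := prec_order.
have Fu : fiber L u u by split=> //; rewrite (_ : vsub u u = @vzero c); [exact: lattice0 | vec_lia].
suff reach x : fiber L u x -> dreach (fiber L u) B prec x m by exact: reach Fu.
elim/(well_founded_ind prec_wf): x => x IHx Fx.
case: (classic (x = m)) => [->|neq_xm]; first exact: dreach_refl.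
have x_supp := fiber_supported u_supp Fx.
have [g gr_g [gxm lt_xg]] := graver_term_order_step prec_order Fx.1 x_supp Fm.1
  (fiber_supported u_supp Fm) (fiber_diff Fx Fm) (m_min x Fx neq_xm).
have [Lg _ _] := gr_g.
have Fxg := fiber_subr Fx Fm.1 Lg gxm.
have lt_xg_dom : [/\ tdom (vsub x g), tdom x & prec (vsub x g) x].
  split=> //; first exact: tdom_supported Fxg.1 (fiber_supported u_supp Fxg).
  exact: tdom_supported Fx.1 x_supp.
apply: (dreach_cons (IHx _ lt_xg_dom Fxg) Fxg _ lt_xg).
by rewrite /pmB (_ : vsub x (vsub x g) = g); [left; exact: grB | vec_lia].
Qed.

End GraverBasis.

Section SymChain.
Variables (c : nat) (L : nat -> vec c -> Prop).
Local Open Scope ring_scope.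
Implicit Types (u v w b : vec c).
Hypothesis L_chain : sym_chain L.

Lemma chain_lattice n : (0 < n)%N -> is_lattice n (L n).
Proof. by case: L_chain => Ln _ /Ln []. Qed.

Lemma chain_sym n : (0 < n)%N -> sym_invariant n (L n).
Proof. by case: L_chain => Ln _ /Ln []. Qed.

Lemma chain_mono m n u : (0 < m)%N -> (m <= n)%N -> L m u -> L n u.
Proof. by case: L_chain => _ Lmn m_pos le_mn; apply: Lmn. Qed.

Lemma chain_vcomp n f g u : (0 < n)%N -> perm_below n f g -> L n u -> L n (vcomp u f).
Proof. by move=> n_pos /(@sact_perm_below c) [s <-]; apply: chain_sym. Qed.

Definition Lunion v := exists2 N, (0 < N)%N & L N v.

Lemma Lunion_vcomp K f g v : perm_below K f g -> Lunion v -> Lunion (vcomp v f).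
Proof.
move=> fg_perm [N N_pos LNv]; have M_pos : (0 < maxn N K)%N by rewrite leq_max N_pos.
exists (maxn N K) => //; apply: chain_vcomp M_pos (perm_below_widen (leq_maxr _ _) fg_perm) _.
exact: chain_mono N_pos (leq_maxl _ _) LNv.
Qed.

Lemma Lunion_lattice n : (0 < n)%N -> is_lattice n (fun v => Lunion v /\ supported_in n v).
Proof.
move=> n_pos; split=> [|u v [[N1 N1_pos L1u] u_supp] [[N2 N2_pos L2v] v_supp]|u []] //.
  by split=> //; exists n => //; exact: lattice0 (chain_lattice n_pos).
have M_pos : (0 < maxn N1 N2)%N by rewrite leq_max N1_pos.
split; last by move=> i j leni; rewrite /vsub u_supp // v_supp.
exists (maxn N1 N2) => //; apply: (latticeB (chain_lattice M_pos)).
  exact: chain_mono N1_pos (leq_maxl _ _) L1u.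
exact: chain_mono N2_pos (leq_maxr _ _) L2v.
Qed.

Lemma graver_Lunion_vcomp K f g v : perm_below K f g ->
  graver Lunion v -> graver Lunion (vcomp v f).
Proof.
move=> fg_perm [Lv nz_v v_min]; have [gK fK _ _] := fg_perm.
split; first exact: Lunion_vcomp fg_perm Lv.
  by move=> eq0; apply: nz_v; rewrite -(vcompK gK v) eq0.
move=> w Lw nz_w wv; rewrite -(vcompK fK w); congr vcomp; apply: v_min.
- exact: Lunion_vcomp (perm_below_sym fg_perm) Lw.
- by move=> eq0; apply: nz_w; rewrite -(vcompK fK w) eq0.
- by move/conf_leE: wv => wv; apply/conf_leE => i j; have := wv (g i) j; rewrite /vcomp gK.
Qed.

Definition copy_in N v := exists K f g, perm_below K f g /\ L N (vcomp v f).

(* If no N works, pick Graver elements v_k with no copy in L_{N_k}, where v_k lies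
   in L_{N_(k+1)}; comparable terms v_k <= v_l o g of the wqo must be equal,
   so v_l has a copy in L_{N_l}. *)
Lemma graver_Lunion_copies : exists2 N, (0 < N)%N & forall v, graver Lunion v -> copy_in N v.
Proof.
apply: NNPP => no_bound.
have [bad bad_spec] : exists bad : nat -> vec c,
    forall N, (0 < N)%N -> graver Lunion (bad N) /\ ~ copy_in N (bad N).
  apply: (choice (fun N v => (0 < N)%N -> graver Lunion v /\ ~ copy_in N v)) => N.
  case: (posnP N) => [-> | N_pos]; first by exists (@vzero c).
  apply: NNPP => none; apply: no_bound; exists N => // v gr_v.
  by apply: NNPP => ncopy; apply: none; exists v.
have [lvl lvl_spec] : exists lvl : vec c -> nat,
    forall v, Lunion v -> (0 < lvl v)%N /\ L (lvl v) v.
  apply: (choice (fun v M => Lunion v -> (0 < M)%N /\ L M v)) => v.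
  by case: (classic (Lunion v)) => [[M M_pos LMv]|nLv]; [exists M | exists 0].
pose Ns k := iter k (fun N => maxn N (lvl (bad N))) 1%N.
have Ns_pos k : (0 < Ns k)%N by elim: k => //= k IHk; rewrite leq_max IHk.
have Ns_mono : {homo Ns : k l / (k <= l)%N}.
  by apply: homo_leq => [//|? ? ?|k]; [exact: leq_trans | exact: leq_maxl].
pose v k := bad (Ns k).
have v_spec k := bad_spec _ (Ns_pos k).
have v_finsupp k : finsupp (v k).
  have [[[M M_pos LMv] _ _] _] := v_spec k.
  by exists M; apply: (lattice_supported (chain_lattice M_pos) LMv).
have [k [l [lt_kl [K [f [g [fg_perm conf_kl]]]]]]] := conf_wqo_up_to_perm v_finsupp.
have [[Lvk nz_vk _] _] := v_spec k.
have [_ _ vlg_min] := graver_Lunion_vcomp (perm_below_sym fg_perm) (v_spec l).1.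
have eq_k := vlg_min _ Lvk nz_vk conf_kl.
apply: (v_spec l).2; exists K, g, f; split; first exact: perm_below_sym.
have [lvl_pos Lk] := lvl_spec _ Lvk.
rewrite -eq_k; apply: chain_mono lvl_pos _ Lk.
by apply: leq_trans (Ns_mono _ _ lt_kl); rewrite /= leq_maxr.
Qed.

Variable N : nat.
Hypothesis N_pos : (0 < N)%N.
Hypothesis N_copies : forall v, graver Lunion v -> copy_in N v.

Definition graver_gens b := graver Lunion b /\ L N b.

Lemma graver_Lunion_orbit n v : (N <= n)%N -> graver Lunion v -> supported_in n v ->
  sym_orbit n graver_gens v.
Proof.
move=> leNn gr_v v_supp.
have [K [f [g [fg_perm LNvf]]]] := N_copies gr_v; have [gK _ _ _] := fg_perm.
have vf_supp := lattice_supported (chain_lattice N_pos) LNvf.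
have [s ->] := sact_restrict (perm_below_sym fg_perm) v_supp
  (fun i j leni => vf_supp i j (leq_trans leNn leni)) (esym (vcompK gK v)).
by exists s, (vcomp v f); split=> //; split=> //; exact: graver_Lunion_vcomp fg_perm gr_v.
Qed.

Lemma sym_orbit_graver_gens n v : (N <= n)%N -> sym_orbit n graver_gens v ->
  graver Lunion v /\ L n v.
Proof.
move=> leNn [s [b [[gr_b LNb] ->]]]; have n_pos := leq_trans N_pos leNn.
split; first exact: (graver_Lunion_vcomp (perm_below_pext s) gr_b).
by apply: chain_sym => //; exact: chain_mono LNb.
Qed.

Lemma chain_saturated n v : (N <= n)%N -> Lunion v -> supported_in n v -> L n v.
Proof.
move=> leNn Lv v_supp; have n_pos := leq_trans N_pos leNn.
apply: (graver_generates (Lunion_lattice n_pos) (L' := L n)) (conj Lv v_supp).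
- exact: lattice0 (chain_lattice n_pos).
- exact: latticeB (chain_lattice n_pos).
move=> g [[Lg g_supp] nz_g g_min].
have gr_g : graver Lunion g.
  by split=> // w Lw nz_w wg; apply: g_min => //; split=> //; exact: conf_le_supported wg g_supp.
exact: (sym_orbit_graver_gens leNn (graver_Lunion_orbit leNn gr_g g_supp)).2.
Qed.

Lemma graver_chain_orbit n v : (N <= n)%N -> graver (L n) v <-> sym_orbit n graver_gens v.
Proof.
move=> leNn; have n_pos := leq_trans N_pos leNn; split.
  move=> [Lv nz_v v_min]; have v_supp := lattice_supported (chain_lattice n_pos) Lv.
  apply: (graver_Lunion_orbit leNn _ v_supp); split=> //; first by exists n.
  move=> w Lw nz_w wv; apply: v_min => //.
  exact: chain_saturated leNn Lw (conf_le_supported wv v_supp).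
move=> /(sym_orbit_graver_gens leNn) [[_ nz_v v_min] Lv].
by split=> // w Lw nz_w wv; apply: v_min => //; exists n.
Qed.

Lemma chain_span m n v : (N <= m)%N -> (m <= n)%N ->
  L n v <-> zspan (sym_orbit n (L m)) v.
Proof.
move=> leNm lemn; have leNn := leq_trans leNm lemn.
have m_pos := leq_trans N_pos leNm; have n_lat := chain_lattice (leq_trans m_pos lemn).
split=> [Lv|].
  apply: (graver_generates n_lat) Lv => [|u w|g /(graver_chain_orbit _ leNn) [s [b [gens_b ->]]]].
  - exact: zspan0.
  - exact: zspan_sub.
  - by apply: zspan_gen; exists s, b; split=> //; case: gens_b => _ /(chain_mono N_pos leNm).
elim=> [|u [s [b [Lb ->]]]|u w _ Lu _ Lw]; first exact: lattice0 n_lat.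
  by apply: chain_sym (leq_trans m_pos lemn) _ _ _; exact: chain_mono Lb.
exact: (latticeB n_lat Lu Lw).
Qed.

End SymChain.

Theorem corollary4p4 (c : nat) (hc : (0 < c)%N) (L : nat -> vec c -> Prop)
  (hL : sym_chain L) :
  [/\ X_stabilizes (@is_graver c) L,
      X_stabilizes (@is_ugb c) L,
      (forall prec, is_term_order prec -> X_stabilizes (is_groebner prec) L),
      X_stabilizes (@is_markov c) L &
      chain_stabilizes L].
Proof.
have [N N_pos N_copies] := graver_Lunion_copies hL.
pose B := graver_gens L N.
have lattice_n n : (N <= n)%N -> is_lattice n (L n).
  by move=> leNn; apply: (chain_lattice hL); exact: leq_trans leNn.
have graver_orbit n : (N <= n)%N -> forall g, graver (L n) g <-> sym_orbit n B g.
  by move=> leNn g; exact: (graver_chain_orbit hL N_pos N_copies g leNn).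
have stab P : (forall n, (N <= n)%N -> P n (L n) (sym_orbit n B)) -> X_stabilizes P L.
  move=> PL; exists N; split=> //; exists B => n leNn; split; last exact: PL.
  by move=> b [_ /(chain_mono hL N_pos leNn)].
have graver_sub n : (N <= n)%N -> forall g, graver (L n) g -> sym_orbit n B g.
  by move=> leNn g /graver_orbit; apply.
have groebner n prec : (N <= n)%N -> is_term_order prec -> is_groebner prec n (L n) (sym_orbit n B).
  move=> leNn prec_order.
  exact: (graver_groebner (lattice_n n leNn) prec_order (graver_sub n leNn)).
split.
- by apply: stab => n leNn v; exact: iff_sym (graver_orbit n leNn v).
- by apply: stab => n leNn prec; exact: groebner.
- by move=> prec prec_order; apply: stab => n leNn; exact: groebner.
- by apply: stab => n leNn; exact: (graver_markov (lattice_n n leNn) (graver_sub n leNn)).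
- by exists N; split=> // m n leNm lemn v; exact: (chain_span hL N_pos N_copies v leNm lemn).
Qed.
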